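(* Let $N\in\mathbb N$ (with $N\ge 2$ when $R_N=D_N$), $r>0$, $0<t_\ast<\infty$ and $t\in(0,t_\ast)$. For all $j,k\in\{1,\dots,N\}$, \[ \int_0^{2\pi r}\overline{M^{A_N}_j(x,t_\ast-t)}\,M^{A_N}_k(x,t)\,dx=m^{A_N}_j(t_\ast)\,\delta_{jk}, \] and, for $R_N\in\{B_N,B_N^\vee,C_N,C_N^\vee,BC_N,D_N\}$, \[ \int_0^{\pi r}\overline{M^{R_N}_j(x,t_\ast-t)}\,M^{R_N}_k(x,t)\,dx=m^{R_N}_j(t_\ast)\,\delta_{jk}, \] where the constants $m^{R_N}_j(t_\ast)$ are: for $R_N\in\{A_N,C_N,C_N^\vee,BC_N\}$, $m^{R_N}_j(t_\ast)=2\pi r\,\vartheta_2\big(\mathcal N^{R_N}J^{R_N}(j)\tau(t_\ast);(\mathcal N^{R_N})^2\tau(t_\ast)\big)$ for all $j$; for $R_N\in\{B_N,B_N^\vee\}$, $m^{R_N}_1(t_\ast)=4\pi r\,\vartheta_2\big(0;(\mathcal N^{R_N})^2\tau(t_\ast)\big)$ and $m^{R_N}_j(t_\ast)=2\pi r\,\vartheta_2\big(\mathcal N^{R_N}J^{R_N}(j)\tau(t_\ast);(\mathcal N^{R_N})^2\tau(t_\ast)\big)$ for $2\le j\le N$; for $D_N$, $m^{D_N}_1(t_\ast)=4\pi r\,\vartheta_2\big(0;(\mathcal N^{D_N})^2\tau(t_\ast)\big)$, $m^{D_N}_j(t_\ast)=2\pi r\,\vartheta_2\big(\mathcal N^{D_N}J^{D_N}(j)\tau(t_\ast);(\mathcal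 N^{D_N})^2\tau(t_\ast)\big)$ for $2\le j\le N-1$, and $m^{D_N}_N(t_\ast)=4\pi r\,\vartheta_2\big(\mathcal N^{D_N}(N-1)\tau(t_\ast);(\mathcal N^{D_N})^2\tau(t_\ast)\big)$.
   Context: Jacobi theta functions: for $v\in\mathbb C$, $\tau\in\mathbb H=\{\tau\in\mathbb C:\Im\tau>0\}$, with $z=e^{\pi i v}$, $q=e^{\pi i\tau}$, set $\vartheta_0(v;\tau)=\sum_{n\in\mathbb Z}(-1)^nq^{n^2}z^{2n}$, $\vartheta_1(v;\tau)=i\sum_{n\in\mathbb Z}(-1)^nq^{(n-1/2)^2}z^{2n-1}$, $\vartheta_2(v;\tau)=\sum_{n\in\mathbb Z}q^{(n-1/2)^2}z^{2n-1}$, $\vartheta_3(v;\tau)=\sum_{n\in\mathbb Z}q^{n^2}z^{2n}$. For $\sigma\in\mathbb R$, $z\in\mathbb C$, $\tau\in\mathbb H$ define $\Theta^A(\sigma,z,\tau)=e^{2\pi i\sigma z}\vartheta_2(\sigma\tau+z;\tau)$, $\Theta^B(\sigma,z,\tau)=e^{2\pi i\sigma z}\vartheta_1(\sigma\tau+z;\tau)-e^{-2\pi i\sigma z}\vartheta_1(\sigma\tau-z;\tau)$, $\Theta^C(\sigma,z,\tau)=e^{2\pi i\sigma z}\vartheta_2(\sigma\tau+z;\tau)-e^{-2\pi i\sigma z}\vartheta_2(\sigma\tau-z;\tau)$, $\Theta^D(\sigma,z,\tau)=e^{2\pi i\sigma z}\vartheta_2(\sigma\tau+z;\tau)+e^{-2\pi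 i\sigma z}\vartheta_2(\sigma\tau-z;\tau)$. The symbol $R_N$ ranges over the seven types $A_N,B_N,B_N^\vee,C_N,C_N^\vee,BC_N,D_N$. Set $\sharp(R_N)=A$ for $A_N$; $=B$ for $B_N,B_N^\vee$; $=C$ for $C_N,C_N^\vee,BC_N$; $=D$ for $D_N$. Set $J^{R_N}(j)=j-1/2$ for $A_N,C_N^\vee$; $=j-1$ for $B_N,B_N^\vee,D_N$; $=j$ for $C_N,BC_N$. Set $\mathcal N^{A_N}=N$, $\mathcal N^{B_N}=2N-1$, $\mathcal N^{B_N^\vee}=\mathcal N^{C_N^\vee}=2N$, $\mathcal N^{C_N}=2(N+1)$, $\mathcal N^{BC_N}=2N+1$, $\mathcal N^{D_N}=2(N-1)$. Fix $r>0$ and put $\xi(x)=x/(2\pi r)$, $\tau(t)=it/(2\pi r^2)$. For $x\in\mathbb R$, $t>0$, $j=1,\dots,N$, define $M^{R_N}_j(x,t)=\Theta^{\sharp(R_N)}\big(J^{R_N}(j)/\mathcal N^{R_N},\ \mathcal N^{R_N}\xi(x),\ (\mathcal N^{R_N})^2\tau(t)\big)$. The overline denotes complex conjugation. *)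

From Stdlib Require Export Reals ZArith.
From Coquelicot Require Export Coquelicot.
Open Scope R_scope.

Definition cexp (w : C) : C :=
  (exp (fst w) * cos (snd w), exp (fst w) * sin (snd w)).

Definition CSeries (a : nat -> C) : C :=
  (Series (fun n => fst (a n)), Series (fun n => snd (a n))).

Definition zsum (f : Z -> C) : C :=
  Cplus (CSeries (fun n => f (Z.of_nat n)))
        (CSeries (fun n => f (- Z.of_nat (S n))%Z)).

Definition Ci : C := (0, 1).
Definition Cpi : C := RtoC PI.

(* Jacobi theta functions, z = e^{pi i v}, q = e^{pi i tau}:
   q^{a} z^{b} = exp(pi i tau a + pi i v b) *)
Definition theta1 (v tau : C) : C :=
  Cmult Ci (zsum (fun n =>
    let m := IZR n - /2 in
    Cmult (RtoC ((-1) ^ Z.abs_nat n))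
      (cexp (Cplus (Cmult (Cmult Cpi Ci) (Cmult tau (RtoC (m * m))))
                   (Cmult (Cmult Cpi Ci) (Cmult v (RtoC (2 * IZR n - 1)))))))).

Definition theta2 (v tau : C) : C :=
  zsum (fun n =>
    let m := IZR n - /2 in
    cexp (Cplus (Cmult (Cmult Cpi Ci) (Cmult tau (RtoC (m * m))))
                (Cmult (Cmult Cpi Ci) (Cmult v (RtoC (2 * IZR n - 1)))))).

Definition ephase (sigma : R) (z : C) : C :=
  cexp (Cmult (Cmult (RtoC (2 * PI * sigma)) Ci) z).

Definition ThetaA (sigma : R) (z tau : C) : C :=
  Cmult (ephase sigma z) (theta2 (Cplus (Cmult (RtoC sigma) tau) z) tau).
Definition ThetaB (sigma : R) (z tau : C) : C :=
  Cminus (Cmult (ephase sigma z) (theta1 (Cplus (Cmult (RtoC sigma) tau) z) tau))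
         (Cmult (ephase sigma (Copp z)) (theta1 (Cminus (Cmult (RtoC sigma) tau) z) tau)).
Definition ThetaC (sigma : R) (z tau : C) : C :=
  Cminus (Cmult (ephase sigma z) (theta2 (Cplus (Cmult (RtoC sigma) tau) z) tau))
         (Cmult (ephase sigma (Copp z)) (theta2 (Cminus (Cmult (RtoC sigma) tau) z) tau)).
Definition ThetaD (sigma : R) (z tau : C) : C :=
  Cplus (Cmult (ephase sigma z) (theta2 (Cplus (Cmult (RtoC sigma) tau) z) tau))
        (Cmult (ephase sigma (Copp z)) (theta2 (Cminus (Cmult (RtoC sigma) tau) z) tau)).

Inductive rtype := TA | TB | TBv | TC | TCv | TBC | TD.

Inductive sharp := SA | SB | SC | SD.

Definition sharp_of (R0 : rtype) : sharp :=
  match R0 with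
  | TA => SA
  | TB | TBv => SB
  | TC | TCv | TBC => SC
  | TD => SD
  end.

Definition Theta (s : sharp) : R -> C -> C -> C :=
  match s with SA => ThetaA | SB => ThetaB | SC => ThetaC | SD => ThetaD end.

Definition Jfun (R0 : rtype) (j : nat) : R :=
  match R0 with
  | TA | TCv => INR j - /2
  | TB | TBv | TD => INR j - 1
  | TC | TBC => INR j
  end.

Definition calN (R0 : rtype) (N : nat) : R :=
  match R0 with
  | TA => INR N
  | TB => 2 * INR N - 1
  | TBv | TCv => 2 * INR N
  | TC => 2 * (INR N + 1)
  | TBC => 2 * INR N + 1
  | TD => 2 * (INR N - 1)
  end.

Definition xi (r x : R) : R := x / (2 * PI * r).
Definition tau (r t : R) : C := (0, t / (2 * PI * r ^ 2)).

Definition M (R0 : rtype) (N : nat) (r : R) (j : nat) (x t : R) : C :=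
  let NN := calN R0 N in
  Theta (sharp_of R0) (Jfun R0 j / NN) (RtoC (NN * xi r x))
        (Cmult (RtoC (NN ^ 2)) (tau r t)).

Definition mconst (R0 : rtype) (N : nat) (r : R) (j : nat) (ts : R) : C :=
  let NN := calN R0 N in
  let tt := Cmult (RtoC (NN ^ 2)) (tau r ts) in
  let generic := Cmult (RtoC (2 * PI * r))
                   (theta2 (Cmult (RtoC (NN * Jfun R0 j)) (tau r ts)) tt) in
  match R0 with
  | TA | TC | TCv | TBC => generic
  | TB | TBv =>
      if Nat.eqb j 1 then Cmult (RtoC (4 * PI * r)) (theta2 (RtoC 0) tt)
      else generic
  | TD =>
      if Nat.eqb j 1 then Cmult (RtoC (4 * PI * r)) (theta2 (RtoC 0) tt)
      else if Nat.eqb j N then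
        Cmult (RtoC (4 * PI * r))
              (theta2 (Cmult (RtoC (NN * (INR N - 1))) (tau r ts)) tt)
      else generic
  end.

Definition upper (R0 : rtype) (r : R) : R :=
  match R0 with TA => 2 * PI * r | _ => PI * r end.

(* Each [M] is an absolutely convergent Fourier series in [x].  With [NN = calN R0 N],
   [J = Jfun R0 j] and [kappa_n = NN (n - 1/2) + J], the theta series give
     e^{2 pi i (J/NN) z} theta_2((J/NN) tau + z; tau) = sum_n c_n(t) e^{i kappa_n x / r},
     c_n(t) = exp (- t (kappa_n^2 - J^2) / (2 r^2)),
   at z = NN xi(x), tau = NN^2 tau(t) (theta_1 adds the unimodular factor i (-1)^n).  For the types
   B, C, D the second summand of Theta is the first one at -x, i.e. the series with frequencies
   -kappa_n; Theta^B, Theta^C are odd and Theta^D is even in z, so the integrand is even in x and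
   the integral over [0, pi r] is half the integral over the period [-pi r, pi r].
   Differences and sums of the kappa's are integers, so integrating the product term by term
   over a period of length 2 pi r keeps only coinciding frequencies.  kappa^k_n = kappa^j_m forces
   j = k and m = n, and sum_n 2 pi r c_n(t) c_n(ts - t) = 2 pi r theta_2(NN J tau(ts); NN^2 tau(ts)).
   A mirrored coincidence kappa^k_n = - kappa^j_m happens only for B at j = k = 1 and for D at
   j = k in {1, N}; it contributes the same amount a second time, whence the factor 4 pi r. *)

From Stdlib Require Import Lra Lia Psatz FunctionalExtensionality.
Open Scope R_scope.

Local Notation CR := C_R_NormedModule.
Local Notation CRC := C_R_CompleteNormedModule.
Local Notation is_Cseries := (@is_series R_AbsRing C_R_NormedModule).

(* Equations produced by [is_RInt_ext] live in a normed-module carrier; [ring] needs them at [C]. *)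
Ltac Cring := match goal with |- ?l = ?r => change (@eq C l r) end; ring.

(** * Absolutely convergent complex series and bilateral sums *)

Lemma norm_C_R (z : C) : @norm R_AbsRing CR z = Cmod z.
Proof.
  unfold norm; simpl; unfold prod_norm, Cmod; simpl.
  change (norm (fst z)) with (Rabs (fst z)); change (norm (snd z)) with (Rabs (snd z)).
  rewrite !Rmult_1_r, <- !Rsqr_def, <- !Rsqr_abs; reflexivity.
Qed.

Lemma sum_n_fst (a : nat -> C) n : fst (@sum_n CR a n) = sum_n (fun k => fst (a k)) n.
Proof. induction n; [rewrite !sum_O | rewrite !sum_Sn; simpl; rewrite <- IHn]; reflexivity. Qed.

Lemma sum_n_snd (a : nat -> C) n : snd (@sum_n CR a n) = sum_n (fun k => snd (a k)) n.
Proof. induction n; [rewrite !sum_O | rewrite !sum_Sn; simpl; rewrite <- IHn]; reflexivity. Qed.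

Lemma is_Cseries_components (a : nat -> C) l :
  is_Cseries a l <->
  is_series (fun n => fst (a n)) (fst l) /\ is_series (fun n => snd (a n)) (snd l).
Proof.
  unfold is_series, filterlim, filter_le, filtermap; split.
  - intros H; split; intros P [eps HP].
    + apply (filter_imp (fun n => P (fst (@sum_n CR a n)))).
      { intros n; rewrite sum_n_fst; auto. }
      apply (H (fun y : CR => P (fst y))); exists eps; intros y [Hy _]; apply HP, Hy.
    + apply (filter_imp (fun n => P (snd (@sum_n CR a n)))).
      { intros n; rewrite sum_n_snd; auto. }
      apply (H (fun y : CR => P (snd y))); exists eps; intros y [_ Hy]; apply HP, Hy.
  - intros [H1 H2] P [eps HP].
    generalize (filter_and _ _ (H1 _ (locally_ball (fst l) eps)) (H2 _ (locally_ball (snd l) eps))).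
    apply filter_imp; intros n [B1 B2]; apply HP; split.
    + rewrite sum_n_fst; exact B1.
    + rewrite sum_n_snd; exact B2.
Qed.

Lemma CSeries_unique (a : nat -> C) l : is_Cseries a l -> CSeries a = l.
Proof.
  intros [H1 H2]%is_Cseries_components; unfold CSeries.
  rewrite (is_series_unique _ _ H1), (is_series_unique _ _ H2); destruct l; reflexivity.
Qed.

Lemma is_Cseries_dominated (a : nat -> C) (A : nat -> R) :
  (forall n, Cmod (a n) <= A n) -> ex_series A -> is_Cseries a (CSeries a).
Proof.
  intros HA HexA.
  destruct (@ex_series_le R_AbsRing CRC a A) as [l Hl]; auto.
  { intros n; change (@norm R_AbsRing CR (a n) <= A n); rewrite norm_C_R; auto. }
  rewrite (CSeries_unique _ _ Hl); exact Hl.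
Qed.

Lemma is_Cseries_scal (a : nat -> C) l g :
  is_Cseries a l -> is_Cseries (fun n => Cmult g (a n)) (Cmult g l).
Proof.
  intros [H1 H2]%is_Cseries_components; apply is_Cseries_components; simpl; split.
  - exact (is_series_minus _ _ _ _ (is_series_scal_l _ _ _ H1) (is_series_scal_l _ _ _ H2)).
  - exact (is_series_plus _ _ _ _ (is_series_scal_l _ _ _ H2) (is_series_scal_l _ _ _ H1)).
Qed.

Lemma sum_n_zero (a : nat -> C) n :
  (forall m, (m <= n)%nat -> a m = RtoC 0) -> @sum_n CR a n = RtoC 0.
Proof.
  induction n as [|n IH]; intros H.
  - rewrite sum_O; auto.
  - rewrite sum_Sn; change (Cplus (@sum_n CR a n) (a (S n)) = RtoC 0).
    rewrite IH, H by (intros; try apply H; lia); ring.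
Qed.

Lemma sum_n_single (a : nat -> C) k n :
  (forall m, m <> k -> a m = RtoC 0) -> (k <= n)%nat -> @sum_n CR a n = a k.
Proof.
  intros H Hkn; induction n as [|n IH].
  - replace k with 0%nat by lia; apply sum_O.
  - rewrite sum_Sn; change (Cplus (@sum_n CR a n) (a (S n)) = a k).
    destruct (Nat.eq_dec k (S n)) as [->|Hk].
    + rewrite sum_n_zero by (intros; apply H; lia); ring.
    + rewrite IH, (H (S n)) by lia; ring.
Qed.

Lemma is_Cseries_single (a : nat -> C) k :
  (forall n, n <> k -> a n = RtoC 0) -> is_Cseries a (a k).
Proof.
  intros H P HP; apply locally_singleton in HP.
  exists k; intros n Hn; rewrite (sum_n_single a k n H Hn); exact HP.
Qed.

Lemma Cmod_lim_le (x : nat -> C) l c B N :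
  filterlim x eventually (@locally CR l) ->
  (forall n, (N <= n)%nat -> Cmod (Cminus (x n) c) <= B) -> Cmod (Cminus l c) <= B.
Proof.
  intros Hx HB; apply Rnot_lt_le; intros Hlt.
  set (d := Cmod (Cminus l c) - B).
  assert (Hd : 0 < d / @norm_factor R_AbsRing CR).
  { apply Rdiv_lt_0_compat; [unfold d; lra | apply norm_factor_gt_0]. }
  destruct (Hx _ (locally_ball l (mkposreal _ Hd))) as [N0 HN0].
  assert (Hclose := norm_compat2 _ _ _ (HN0 (max N N0) ltac:(lia))).
  rewrite norm_C_R in Hclose; simpl in Hclose.
  replace (norm_factor * (d / norm_factor)) with d in Hclose
    by (field; apply Rgt_not_eq, norm_factor_gt_0).
  assert (Htri := Cmod_triangle (Cminus l (x (max N N0))) (Cminus (x (max N N0)) c)).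
  replace (Cminus l (x (max N N0))) with (Copp (Cminus (x (max N N0)) l)) in Htri by ring.
  rewrite Cmod_opp in Htri.
  replace (Cplus (Copp (Cminus (x (max N N0)) l)) (Cminus (x (max N N0)) c))
    with (Cminus l c) in Htri by ring.
  specialize (HB (max N N0) ltac:(lia)); unfold d in Hclose;
    change (@minus CR (x (max N N0)) l) with (Cminus (x (max N N0)) l) in Hclose; lra.
Qed.

Lemma Cmod_sum_n_le (a : nat -> C) (A : nat -> R) n m :
  (forall k, Cmod (a k) <= A k) -> (n <= m)%nat ->
  Cmod (Cminus (@sum_n CR a m) (@sum_n CR a n)) <= sum_n A m - sum_n A n.
Proof.
  intros HA Hnm; induction Hnm as [|m Hnm IH].
  - replace (Cminus (@sum_n CR a n) (@sum_n CR a n)) with (RtoC 0) by ring.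
    rewrite Cmod_0; lra.
  - rewrite !sum_Sn; change (Cmod (Cminus (Cplus (@sum_n CR a m) (a (S m))) (@sum_n CR a n))
      <= sum_n A m + A (S m) - sum_n A n).
    replace (Cminus (Cplus (@sum_n CR a m) (a (S m))) (@sum_n CR a n))
      with (Cplus (Cminus (@sum_n CR a m) (@sum_n CR a n)) (a (S m))) by ring.
    eapply Rle_trans; [apply Cmod_triangle | specialize (HA (S m)); lra].
Qed.

Lemma sum_n_le_Series (A : nat -> R) n :
  (forall k, 0 <= A k) -> ex_series A -> sum_n A n <= Series A.
Proof.
  intros H0 H; apply is_lim_seq_incr_compare; [apply (Series_correct _ H) |].
  intros k; rewrite sum_Sn; change (sum_n A k <= sum_n A k + A (S k)); specialize (H0 (S k)); lra.
Qed.

Lemma Cmod_Cseries_tail_le (a : nat -> C) (A : nat -> R) l n :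
  (forall k, Cmod (a k) <= A k) -> ex_series A -> is_Cseries a l ->
  Cmod (Cminus l (@sum_n CR a n)) <= Series A - sum_n A n.
Proof.
  intros HA HexA HS; apply (Cmod_lim_le _ _ _ _ n HS); intros m Hm.
  eapply Rle_trans; [apply Cmod_sum_n_le; eauto |].
  enough (sum_n A m <= Series A) by lra.
  apply sum_n_le_Series; auto; intros k; eapply Rle_trans; [apply Cmod_ge_0 | apply HA].
Qed.

Lemma Cmod_Cseries_le (a : nat -> C) (A : nat -> R) l :
  (forall k, Cmod (a k) <= A k) -> ex_series A -> is_Cseries a l -> Cmod l <= Series A.
Proof.
  intros HA HexA HS.
  assert (Htail := Cmod_Cseries_tail_le a A l 0 HA HexA HS); rewrite !sum_O in Htail.
  replace l with (Cplus (Cminus l (a 0%nat)) (a 0%nat)) by ring.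
  eapply Rle_trans; [apply Cmod_triangle | specialize (HA 0%nat); lra].
Qed.

Definition zsummable (f : Z -> C) :=
  ex_series (fun n => Cmod (f (Z.of_nat n))) /\
  ex_series (fun n => Cmod (f (- Z.of_nat (S n))%Z)).

Lemma zsummable_Cmod (f g : Z -> C) :
  (forall n, Cmod (f n) = Cmod (g n)) -> zsummable g -> zsummable f.
Proof.
  intros H [H1 H2]; split; [revert H1 | revert H2]; apply ex_series_ext; intros k; auto.
Qed.

Lemma zsum_unique (f : Z -> C) l1 l2 :
  is_Cseries (fun n => f (Z.of_nat n)) l1 -> is_Cseries (fun n => f (- Z.of_nat (S n))%Z) l2 ->
  zsum f = Cplus l1 l2.
Proof. intros H1 H2; unfold zsum; rewrite (CSeries_unique _ _ H1), (CSeries_unique _ _ H2); reflexivity. Qed.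

Lemma zsum_ext (f g : Z -> C) : (forall n, f n = g n) -> zsum f = zsum g.
Proof. intros H; replace g with f; [reflexivity | apply functional_extensionality; auto]. Qed.

Lemma zsum_single (f : Z -> C) n0 : (forall n, n <> n0 -> f n = RtoC 0) -> zsum f = f n0.
Proof.
  intros H; destruct (Z_le_gt_dec 0 n0).
  - rewrite (zsum_unique f (f n0) (RtoC 0)); [ring | |].
    + replace (f n0) with (f (Z.of_nat (Z.to_nat n0))) by (f_equal; lia).
      apply (is_Cseries_single (fun n => f (Z.of_nat n))); intros n Hn; apply H; lia.
    + rewrite <- (H (-1)%Z) by lia.
      apply (is_Cseries_single (fun n => f (- Z.of_nat (S n))%Z) 0); intros n Hn; apply H; lia.
  - rewrite (zsum_unique f (RtoC 0) (f n0)); [ring | |].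
    + rewrite <- (H 0%Z) by lia.
      apply (is_Cseries_single (fun n => f (Z.of_nat n)) 0); intros n Hn; apply H; lia.
    + replace (f n0) with (f (- Z.of_nat (S (Z.to_nat (- n0 - 1))))%Z) by (f_equal; lia).
      apply (is_Cseries_single (fun n => f (- Z.of_nat (S n))%Z)); intros n Hn; apply H; lia.
Qed.

Lemma zsum_zero (f : Z -> C) : (forall n, f n = RtoC 0) -> zsum f = RtoC 0.
Proof. intros H; rewrite (zsum_single f 0); auto. Qed.

Lemma Cmult_zsum (f : Z -> C) g : zsummable f -> Cmult g (zsum f) = zsum (fun n => Cmult g (f n)).
Proof.
  intros [H1 H2].
  assert (K1 := is_Cseries_dominated _ _ (fun n => Rle_refl _) H1).
  assert (K2 := is_Cseries_dominated _ _ (fun n => Rle_refl _) H2).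
  rewrite (zsum_unique f _ _ K1 K2).
  rewrite (zsum_unique _ _ _ (is_Cseries_scal _ _ g K1) (is_Cseries_scal _ _ g K2)); ring.
Qed.

Lemma Cconj_zsum (f : Z -> C) : Cconj (zsum f) = zsum (fun n => Cconj (f n)).
Proof. unfold zsum, CSeries, Cconj, Cplus; simpl; rewrite !Series_opp; f_equal; ring. Qed.

Lemma RtoC_mult_zsum (e : R) (f : Z -> C) :
  Cmult (RtoC e) (zsum f) = zsum (fun n => Cmult (RtoC e) (f n)).
Proof.
  assert (Hm : forall a b : nat -> R, Series (fun k => e * a k - 0 * b k) = e * Series a)
    by (intros a b; rewrite <- Series_scal_l; apply Series_ext; intros; ring).
  assert (Hp : forall a b : nat -> R, Series (fun k => e * a k + 0 * b k) = e * Series a)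
    by (intros a b; rewrite <- Series_scal_l; apply Series_ext; intros; ring).
  unfold zsum, CSeries, Cmult, Cplus, RtoC; simpl; rewrite !Hm, !Hp; f_equal; ring.
Qed.

Lemma Cmod_zsum_le (f : Z -> C) : zsummable f ->
  Cmod (zsum f) <= Series (fun k => Cmod (f (Z.of_nat k))) + Series (fun k => Cmod (f (- Z.of_nat (S k))%Z)).
Proof.
  intros [H1 H2]; unfold zsum; eapply Rle_trans; [apply Cmod_triangle | apply Rplus_le_compat].
  - apply (Cmod_Cseries_le _ _ _ (fun k => Rle_refl _) H1), (is_Cseries_dominated _ _ (fun k => Rle_refl _) H1).
  - apply (Cmod_Cseries_le _ _ _ (fun k => Rle_refl _) H2), (is_Cseries_dominated _ _ (fun k => Rle_refl _) H2).
Qed.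

(** * Term-by-term integration *)

Lemma Cseries_mult_uniform (u : nat -> R -> C) (A : nat -> R) (h s : R -> C) H :
  (forall n x, Cmod (u n x) <= A n) -> ex_series A -> (forall x, Cmod (h x) <= H) ->
  (forall x, is_Cseries (fun n => u n x) (s x)) ->
  filterlim (fun n x => Cmult (h x) (@sum_n CR (fun k => u k x) n)) eventually
    (@locally (fct_UniformSpace R CR) (fun x => Cmult (h x) (s x))).
Proof.
  intros HA HexA Hh HS P [eps HP].
  assert (HH : 0 < H + 1) by (specialize (Hh 0); assert (0 <= Cmod (h 0)) by apply Cmod_ge_0; lra).
  destruct (Series_correct _ HexA _
    (locally_ball (Series A) (mkposreal _ (Rdiv_lt_0_compat _ _ (cond_pos eps) HH))))
    as [N0 HN0].
  exists N0; intros n Hn; apply HP; intros x; apply (@norm_compat1 R_AbsRing CR).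
  rewrite norm_C_R; change (@minus CR ?a ?b) with (Cminus a b).
  replace (Cminus (Cmult (h x) (@sum_n CR (fun k => u k x) n)) (Cmult (h x) (s x)))
    with (Cmult (h x) (Copp (Cminus (s x) (@sum_n CR (fun k => u k x) n)))) by ring.
  rewrite Cmod_mult, Cmod_opp.
  assert (Htail := Cmod_Cseries_tail_le _ _ _ n (fun k => HA k x) HexA (HS x)).
  assert (Hpart : sum_n A n <= Series A)
    by (apply sum_n_le_Series; auto; intros k; eapply Rle_trans; [apply Cmod_ge_0 | apply (HA k 0)]).
  assert (Hclose := HN0 n Hn); change (Rabs (sum_n A n - Series A) < eps / (H + 1)) in Hclose.
  rewrite Rabs_left1 in Hclose by lra.
  assert (0 <= Cmod (h x)) by apply Cmod_ge_0.
  apply Rle_lt_trans with ((H + 1) * (Series A - sum_n A n)).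
  - apply Rmult_le_compat; try apply Cmod_ge_0; specialize (Hh x); lra.
  - apply (Rmult_lt_compat_l (H + 1)) in Hclose; auto.
    replace ((H + 1) * (eps / (H + 1))) with (pos eps) in Hclose by (field; lra); lra.
Qed.

Lemma is_RInt_Cseries (u : nat -> R -> C) (A : nat -> R) (h s : R -> C) H (I : nat -> C) a b :
  (forall n x, Cmod (u n x) <= A n) -> ex_series A -> (forall x, Cmod (h x) <= H) ->
  (forall x, is_Cseries (fun n => u n x) (s x)) ->
  (forall n, is_RInt (fun x => Cmult (h x) (u n x)) a b (I n)) ->
  exists l, is_Cseries I l /\ is_RInt (fun x => Cmult (h x) (s x)) a b l.
Proof.
  intros HA HexA Hh HS HI.
  destruct (@filterlim_RInt nat CRC (fun n x => Cmult (h x) (@sum_n CR (fun k => u k x) n)) a b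
     eventually _ (fun x => Cmult (h x) (s x)) (@sum_n CR I)) as [l [Hl Hint]].
  - induction x as [|n IH].
    + eapply is_RInt_ext; [| rewrite sum_O; apply HI]; intros x _; rewrite sum_O; reflexivity.
    + rewrite sum_Sn; eapply is_RInt_ext; [| apply (is_RInt_plus _ _ _ _ _ _ IH (HI (S n)))].
      intros x _; rewrite sum_Sn; symmetry; apply Cmult_plus_distr_l.
  - exact (Cseries_mult_uniform u A h s H HA HexA Hh HS).
  - exists l; split; assumption.
Qed.

Lemma is_RInt_zsum (u : Z -> R -> C) (A : Z -> R) (h : R -> C) H (I : Z -> C) a b :
  (forall n x, Cmod (u n x) <= A n) ->
  ex_series (fun k => A (Z.of_nat k)) -> ex_series (fun k => A (- Z.of_nat (S k))%Z) ->
  (forall x, Cmod (h x) <= H) ->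
  (forall n, is_RInt (fun x => Cmult (h x) (u n x)) a b (I n)) ->
  is_RInt (fun x => Cmult (h x) (zsum (fun n => u n x))) a b (zsum I).
Proof.
  intros HA H1 H2 Hh HI.
  destruct (is_RInt_Cseries (fun k => u (Z.of_nat k)) (fun k => A (Z.of_nat k)) h
     (fun x => CSeries (fun k => u (Z.of_nat k) x)) H (fun k => I (Z.of_nat k)) a b)
     as [l1 [K1 L1]]; auto.
  { intros x; apply (is_Cseries_dominated _ (fun k => A (Z.of_nat k))); auto. }
  destruct (is_RInt_Cseries (fun k => u (- Z.of_nat (S k))%Z) (fun k => A (- Z.of_nat (S k))%Z) h
     (fun x => CSeries (fun k => u (- Z.of_nat (S k))%Z x)) H (fun k => I (- Z.of_nat (S k))%Z) a b)
     as [l2 [K2 L2]]; auto.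
  { intros x; apply (is_Cseries_dominated _ (fun k => A (- Z.of_nat (S k))%Z)); auto. }
  rewrite (zsum_unique I l1 l2 K1 K2).
  eapply is_RInt_ext; [| apply (is_RInt_plus _ _ _ _ _ _ L1 L2)].
  intros x _; symmetry; apply Cmult_plus_distr_l.
Qed.

Lemma is_RInt_Cmult_l (f : R -> C) a b l (g : C) :
  is_RInt f a b l -> is_RInt (fun x => Cmult g (f x)) a b (Cmult g l).
Proof.
  intros H; assert (H1 := is_RInt_fct_extend_fst f a b l H); assert (H2 := is_RInt_fct_extend_snd f a b l H).
  apply (is_RInt_fct_extend_pair (U := R_NormedModule) (V := R_NormedModule)); simpl.
  - exact (is_RInt_minus _ _ _ _ _ _ (is_RInt_scal _ _ _ (fst g) _ H1) (is_RInt_scal _ _ _ (snd g) _ H2)).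
  - exact (is_RInt_plus _ _ _ _ _ _ (is_RInt_scal _ _ _ (fst g) _ H2) (is_RInt_scal _ _ _ (snd g) _ H1)).
Qed.

Lemma is_RInt_value {V : NormedModule R_AbsRing} (f : R -> V) a b l l' :
  is_RInt f a b l -> l = l' -> is_RInt f a b l'.
Proof. intros H <-; exact H. Qed.

Lemma Cconj_RtoC x : Cconj (RtoC x) = RtoC x.
Proof. unfold Cconj, RtoC; simpl; f_equal; ring. Qed.

Lemma Cmult_conj_unit (g : C) : Cmod g = 1 -> Cmult g (Cconj g) = RtoC 1.
Proof. intros H; rewrite <- Cmod2_conj, H, pow1; reflexivity. Qed.

Lemma Cconj_sign_product (e : R) (a b : C) : e * e = 1 ->
  Cmult (Cconj (Cmult (RtoC e) a)) (Cmult (RtoC e) b) = Cmult (Cconj a) b.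
Proof.
  intros He; rewrite Cmult_conj, Cconj_RtoC.
  transitivity (Cmult (RtoC (e * e)) (Cmult (Cconj a) b)); [rewrite RtoC_mult; ring | rewrite He; ring].
Qed.

(** * Fourier series over a period *)

Definition expi (w x : R) : C := (cos (w * x), sin (w * x)).

Lemma Cmod_expi w x : Cmod (expi w x) = 1.
Proof.
  unfold Cmod, expi; simpl; rewrite !Rmult_1_r, <- sqrt_1; f_equal.
  rewrite <- (sin2_cos2 (w * x)); unfold Rsqr; ring.
Qed.

Lemma Cconj_expi w x : Cconj (expi w x) = expi (- w) x.
Proof.
  unfold Cconj, expi; simpl; replace (- w * x) with (- (w * x)) by ring.
  rewrite cos_neg, sin_neg; reflexivity.
Qed.

Lemma expi_plus w1 w2 x : Cmult (expi w1 x) (expi w2 x) = expi (w1 + w2) x.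
Proof.
  unfold Cmult, expi; simpl; replace ((w1 + w2) * x) with (w1 * x + w2 * x) by ring.
  rewrite cos_plus, sin_plus; f_equal; ring.
Qed.

Lemma cos_period_Z y k : cos (y + 2 * IZR k * PI) = cos y.
Proof.
  destruct (Z_le_gt_dec 0 k).
  - rewrite <- (Z2Nat.id k), <- INR_IZR_INZ by lia; apply cos_period.
  - rewrite <- (cos_period _ (Z.to_nat (- k))), INR_IZR_INZ, Z2Nat.id, opp_IZR by lia.
    f_equal; ring.
Qed.

Lemma sin_period_Z y k : sin (y + 2 * IZR k * PI) = sin y.
Proof.
  destruct (Z_le_gt_dec 0 k).
  - rewrite <- (Z2Nat.id k), <- INR_IZR_INZ by lia; apply sin_period.
  - rewrite <- (sin_period _ (Z.to_nat (- k))), INR_IZR_INZ, Z2Nat.id, opp_IZR by lia.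
    f_equal; ring.
Qed.

Lemma is_RInt_expi_period r c w : 0 < r -> (exists z : Z, w * r = IZR z) ->
  is_RInt (fun x => expi w x) c (c + 2 * PI * r)
    (if Req_EM_T w 0 then RtoC (2 * PI * r) else RtoC 0).
Proof.
  intros Hr [z Hz]; destruct (Req_EM_T w 0) as [->|Hw];
    apply (is_RInt_fct_extend_pair (U := R_NormedModule) (V := R_NormedModule)); simpl.
  - apply (is_RInt_ext (fun _ => 1)); [intros x _; rewrite Rmult_0_l, cos_0; reflexivity |].
    replace (2 * PI * r) with (scal (c + 2 * PI * r - c) 1) at 2
      by (unfold scal; simpl; unfold mult; simpl; ring).
    apply (@is_RInt_const R_NormedModule).
  - apply (is_RInt_ext (fun _ => 0)); [intros x _; rewrite Rmult_0_l, sin_0; reflexivity |].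
    generalize (@is_RInt_const R_NormedModule c (c + 2 * PI * r) 0).
    unfold scal; simpl; unfold mult; simpl; rewrite Rmult_0_r; auto.
  - replace 0 with (sin (w * (c + 2 * PI * r)) / w - sin (w * c) / w).
    + apply (is_RInt_derive (fun x => sin (w * x) / w)).
      * intros x _; auto_derive; auto; field; auto.
      * intros x _; apply (ex_derive_continuous (fun x => cos (w * x))); auto_derive; auto.
    + replace (w * (c + 2 * PI * r)) with (w * c + 2 * IZR z * PI) by (rewrite <- Hz; ring).
      rewrite sin_period_Z; ring.
  - replace 0 with (- cos (w * (c + 2 * PI * r)) / w - - cos (w * c) / w).
    + apply (is_RInt_derive (fun x => - cos (w * x) / w)).
      * intros x _; auto_derive; auto; field; auto.
      * intros x _; apply (ex_derive_continuous (fun x => sin (w * x))); auto_derive; auto.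
    + replace (w * (c + 2 * PI * r)) with (w * c + 2 * IZR z * PI) by (rewrite <- Hz; ring).
      rewrite cos_period_Z; field; auto.
Qed.

Definition fourier (a : Z -> C) (w : Z -> R) (x : R) : C :=
  zsum (fun n => Cmult (a n) (expi (w n) x)).

Lemma fourier_bounded (a : Z -> C) (w : Z -> R) :
  zsummable a -> exists K, forall x, Cmod (fourier a w x) <= K.
Proof.
  intros Ha.
  exists (Series (fun k => Cmod (a (Z.of_nat k))) + Series (fun k => Cmod (a (- Z.of_nat (S k))%Z))).
  intros x; assert (Hmod : forall n, Cmod (Cmult (a n) (expi (w n) x)) = Cmod (a n))
    by (intros n; rewrite Cmod_mult, Cmod_expi; ring).
  eapply Rle_trans; [apply Cmod_zsum_le, (zsummable_Cmod _ a Hmod Ha) |].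
  right; f_equal; apply Series_ext; intros k; apply Hmod.
Qed.

Definition fourier_pairing (r : R) (a : Z -> C) (w : Z -> R) (b : Z -> C) (v : Z -> R) : C :=
  zsum (fun n => zsum (fun m => if Req_EM_T (w n) (v m)
    then Cmult (RtoC (2 * PI * r)) (Cmult (a n) (Cconj (b m))) else RtoC 0)).

Lemma is_RInt_fourier_orthogonal (a b : Z -> C) (w v : Z -> R) r c :
  0 < r -> zsummable a -> zsummable b ->
  (forall n m, exists z : Z, (w n - v m) * r = IZR z) ->
  is_RInt (fun x => Cmult (Cconj (fourier b v x)) (fourier a w x)) c (c + 2 * PI * r)
    (fourier_pairing r a w b v).
Proof.
  intros Hr Ha Hb Hwv.
  destruct (fourier_bounded b v Hb) as [Kb HKb].
  apply (is_RInt_zsum (fun n x => Cmult (a n) (expi (w n) x)) (fun n => Cmod (a n)) _ Kb).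
  - intros n x; rewrite Cmod_mult, Cmod_expi; lra.
  - apply Ha.
  - apply Ha.
  - intros x; rewrite Cmod_conj; apply HKb.
  - intros n.
    apply (is_RInt_ext (fun x => Cmult (Cmult (a n) (expi (w n) x))
              (zsum (fun m => Cmult (Cconj (b m)) (expi (- v m) x))))).
    { intros x _; unfold fourier; rewrite Cconj_zsum.
      rewrite (zsum_ext (fun m => Cconj (Cmult (b m) (expi (v m) x)))
                        (fun m => Cmult (Cconj (b m)) (expi (- v m) x)))
        by (intros m; rewrite Cmult_conj, Cconj_expi; reflexivity).
      Cring. }
    apply (is_RInt_zsum (fun m x => Cmult (Cconj (b m)) (expi (- v m) x)) (fun m => Cmod (b m)) _ (Cmod (a n))).
    + intros m x; rewrite Cmod_mult, Cmod_expi, Cmod_conj; lra.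
    + apply Hb.
    + apply Hb.
    + intros x; rewrite Cmod_mult, Cmod_expi; lra.
    + intros m.
      apply (is_RInt_ext (fun x => Cmult (Cmult (a n) (Cconj (b m))) (expi (w n - v m) x))).
      { intros x _; unfold Rminus; rewrite <- expi_plus; Cring. }
      replace (if Req_EM_T (w n) (v m) then _ else _)
        with (Cmult (Cmult (a n) (Cconj (b m))) (if Req_EM_T (w n - v m) 0 then RtoC (2 * PI * r) else RtoC 0)).
      * apply is_RInt_Cmult_l, is_RInt_expi_period; auto.
      * destruct (Req_EM_T (w n - v m) 0), (Req_EM_T (w n) (v m)); try ring; lra.
Qed.

Lemma is_RInt_even_half (f : R -> C) L l : 0 <= L -> is_RInt f (- L) L l ->
  (forall x, f (- x) = f x) -> is_RInt f 0 L (Cmult (RtoC (/ 2)) l).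
Proof.
  intros HL Hf Heven.
  assert (E : @ex_RInt CRC f (- L) L) by (exists l; exact Hf).
  destruct (@ex_RInt_Chasles_1 CRC f (- L) 0 L ltac:(lra) E) as [l1 H1].
  assert (H2' : is_RInt f 0 L l1).
  { apply (is_RInt_ext (fun y => @opp CR (@opp CR (f (- y)))));
      [intros x _; rewrite Heven; apply opp_opp |].
    replace l1 with (@opp CR (@opp CR l1)) by apply opp_opp.
    apply is_RInt_swap, is_RInt_opp, is_RInt_comp_opp; rewrite Ropp_0; exact H1. }
  assert (Hl : l = Cplus l1 l1).
  { rewrite <- (@is_RInt_unique CRC f (- L) L l Hf).
    exact (@is_RInt_unique CRC f (- L) L _ (is_RInt_Chasles f (- L) 0 L l1 l1 H1 H2')). }
  rewrite Hl; replace (Cmult (RtoC (/ 2)) (Cplus l1 l1)) with l1; [exact H2' |].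
  apply injective_projections; simpl; field.
Qed.

(** * Gaussian weights *)

Definition freq (NN J : R) (n : Z) : R := NN * (IZR n - / 2) + J.

Definition gauss (NN J r t : R) (n : Z) : R :=
  exp (- t * (freq NN J n ^ 2 - J ^ 2) / (2 * r ^ 2)).

Lemma gauss_mul NN J r ts t n : 0 < r ->
  gauss NN J r t n * gauss NN J r (ts - t) n = gauss NN J r ts n.
Proof. intros Hr; unfold gauss; rewrite <- exp_plus; f_equal; field; lra. Qed.

Lemma exp_pow_INR a k : exp a ^ k = exp (INR k * a).
Proof.
  induction k as [|k IH]; [simpl; rewrite Rmult_0_l, exp_0; reflexivity |].
  rewrite S_INR; simpl; rewrite IH, <- exp_plus; f_equal; ring.
Qed.

Lemma exp_quadratic_le_geom (al J D y : R) (k : nat) : 0 < al -> INR k - D <= y ->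
  exp (- al * (y ^ 2 - J ^ 2)) <= exp (al * (2 * D + 1 + J ^ 2)) * exp (- 2 * al) ^ k.
Proof.
  intros Hal Hy; rewrite exp_pow_INR, <- exp_plus.
  destruct (Req_dec (- al * (y ^ 2 - J ^ 2)) (al * (2 * D + 1 + J ^ 2) + INR k * (- 2 * al))) as [E|E];
    [rewrite E; apply Rle_refl | left; apply exp_increasing].
  assert (y ^ 2 >= 2 * INR k - 2 * D - 1) by (pose proof (pow2_ge_0 (y - 1)); nra).
  nra.
Qed.

Lemma ex_series_exp_quadratic (al J D : R) (y : nat -> R) : 0 < al ->
  (forall k, INR k - D <= y k) -> ex_series (fun k => exp (- al * (y k ^ 2 - J ^ 2))).
Proof.
  intros Hal Hy.
  apply (ex_series_le (K := R_AbsRing) (V := R_CompleteNormedModule) _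
    (fun k => exp (al * (2 * D + 1 + J ^ 2)) * exp (- 2 * al) ^ k)).
  - intros k; change (Rabs (exp (- al * (y k ^ 2 - J ^ 2)))
      <= exp (al * (2 * D + 1 + J ^ 2)) * exp (- 2 * al) ^ k).
    rewrite Rabs_pos_eq by (left; apply exp_pos); apply exp_quadratic_le_geom; auto.
  - apply (ex_series_scal_l _ (fun k => exp (- 2 * al) ^ k)), ex_series_geom.
    rewrite Rabs_pos_eq by (left; apply exp_pos); rewrite <- exp_0; apply exp_increasing; lra.
Qed.

Lemma zsummable_gauss NN J r t : 1 <= NN -> 0 <= J -> 0 < r -> 0 < t ->
  zsummable (fun n => RtoC (gauss NN J r t n)).
Proof.
  intros HNN HJ Hr Ht.
  assert (Hal : 0 < t / (2 * r ^ 2)) by (apply Rdiv_lt_0_compat; nra).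
  assert (Hg : forall n y, freq NN J n ^ 2 = y ^ 2 ->
    Cmod (RtoC (gauss NN J r t n)) = exp (- (t / (2 * r ^ 2)) * (y ^ 2 - J ^ 2))).
  { intros n y Hy; rewrite Cmod_R, Rabs_pos_eq by (left; apply exp_pos).
    unfold gauss; rewrite Hy; f_equal; field; lra. }
  split.
  - apply (ex_series_ext (fun k => exp (- (t / (2 * r ^ 2)) * (freq NN J (Z.of_nat k) ^ 2 - J ^ 2)))).
    { intros k; symmetry; apply Hg; reflexivity. }
    apply (ex_series_exp_quadratic _ _ (NN / 2)); auto.
    intros k; unfold freq; rewrite <- INR_IZR_INZ; assert (0 <= INR k) by apply pos_INR; nra.
  - apply (ex_series_ext (fun k => exp (- (t / (2 * r ^ 2)) * ((- freq NN J (- Z.of_nat (S k))) ^ 2 - J ^ 2)))).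
    { intros k; symmetry; apply Hg; ring. }
    apply (ex_series_exp_quadratic _ _ J); auto.
    intros k; unfold freq; rewrite opp_IZR, <- INR_IZR_INZ, S_INR; assert (0 <= INR k) by apply pos_INR; nra.
Qed.

Lemma zsummable_unit_gauss (g : Z -> C) NN J r t : (forall n, Cmod (g n) = 1) ->
  1 <= NN -> 0 <= J -> 0 < r -> 0 < t -> zsummable (fun n => Cmult (g n) (RtoC (gauss NN J r t n))).
Proof.
  intros Hg HNN HJ Hr Ht; apply (zsummable_Cmod _ (fun n => RtoC (gauss NN J r t n))).
  - intros n; rewrite Cmod_mult, Hg; ring.
  - apply zsummable_gauss; auto.
Qed.

(** * Theta functions as Fourier series *)

Definition theta_term (n : Z) (v tau0 : C) : C :=
  let m := IZR n - /2 in
  cexp (Cplus (Cmult (Cmult Cpi Ci) (Cmult tau0 (RtoC (m * m))))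
              (Cmult (Cmult Cpi Ci) (Cmult v (RtoC (2 * IZR n - 1))))).

Lemma theta2_zsum v tau0 : theta2 v tau0 = zsum (fun n => theta_term n v tau0).
Proof. reflexivity. Qed.

Lemma theta1_zsum v tau0 :
  theta1 v tau0 = Cmult Ci (zsum (fun n => Cmult (RtoC ((-1) ^ Z.abs_nat n)) (theta_term n v tau0))).
Proof. reflexivity. Qed.

Lemma cexp_plus a b : Cmult (cexp a) (cexp b) = cexp (Cplus a b).
Proof.
  destruct a as [a1 a2], b as [b1 b2]; unfold cexp, Cmult, Cplus; simpl.
  rewrite exp_plus, cos_plus, sin_plus; f_equal; ring.
Qed.

Lemma cexp_polar w p q : fst w = p -> snd w = q -> cexp w = Cmult (RtoC (exp p)) (expi 1 q).
Proof.
  destruct w; simpl; intros -> ->; unfold cexp, expi, Cmult, RtoC; simpl.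
  rewrite Rmult_1_l; f_equal; ring.
Qed.

Lemma Cmod_cexp w : Cmod (cexp w) = exp (fst w).
Proof.
  destruct w as [a b]; unfold cexp, Cmod; simpl.
  replace (exp a * cos b * (exp a * cos b * 1) + exp a * sin b * (exp a * sin b * 1))
    with (exp a ^ 2 * (sin b ^ 2 + cos b ^ 2)) by ring.
  rewrite <- !Rsqr_pow2, sin2_cos2, Rmult_1_r, Rsqr_pow2.
  apply sqrt_pow2; left; apply exp_pos.
Qed.

Section ThetaTerm.
Variables (NN J r t : R) (n : Z).
Hypothesis HNN : NN <> 0.
Hypothesis Hr : 0 < r.

Let sig := J / NN.
Let tt := Cmult (RtoC (NN ^ 2)) (tau r t).
Let z (x : R) := RtoC (NN * xi r x).

Lemma ephase_theta_term x :
  Cmult (ephase sig (z x)) (theta_term n (Cplus (Cmult (RtoC sig) tt) (z x)) tt) =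
  Cmult (RtoC (gauss NN J r t n)) (expi (freq NN J n / r) x).
Proof.
  assert (PI <> 0) by apply PI_neq0.
  unfold ephase, theta_term; rewrite cexp_plus.
  rewrite (cexp_polar _ (- t * (freq NN J n ^ 2 - J ^ 2) / (2 * r ^ 2)) (freq NN J n / r * x)).
  - unfold gauss, expi; rewrite Rmult_1_l; reflexivity.
  - unfold sig, z, tt, Cmult, Cplus, RtoC, Ci, Cpi, tau, xi, freq; simpl; field; lra.
  - unfold sig, z, tt, Cmult, Cplus, RtoC, Ci, Cpi, tau, xi, freq; simpl; field; lra.
Qed.

Lemma Cmod_theta_term x :
  Cmod (theta_term n (Cplus (Cmult (RtoC sig) tt) (z x)) tt) = gauss NN J r t n.
Proof.
  assert (PI <> 0) by apply PI_neq0.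
  unfold theta_term; rewrite Cmod_cexp; unfold gauss; f_equal.
  unfold sig, z, tt, Cmult, Cplus, RtoC, Ci, Cpi, tau, xi, freq; simpl; field; lra.
Qed.

End ThetaTerm.

Definition theta_fourier (al : Z -> C) (NN J r t sg x : R) : C :=
  fourier (fun n => Cmult (al n) (RtoC (gauss NN J r t n))) (fun n => sg * freq NN J n / r) x.

Definition theta1_coef (n : Z) : C := Cmult Ci (RtoC ((-1) ^ Z.abs_nat n)).

Definition theta_fourier_pair (al be : Z -> C) (NN J r t x : R) : C :=
  Cplus (theta_fourier al NN J r t 1 x) (theta_fourier be NN J r t (-1) x).

Lemma theta_fourier_opp_x al NN J r t x :
  theta_fourier al NN J r t 1 (- x) = theta_fourier al NN J r t (-1) x.
Proof.
  unfold theta_fourier, fourier; apply zsum_ext; intros n; unfold expi.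
  replace (1 * freq NN J n / r * - x) with (-1 * freq NN J n / r * x) by (unfold Rdiv; ring).
  reflexivity.
Qed.

Lemma RtoC_xi_opp NN r x : RtoC (NN * xi r (- x)) = Copp (RtoC (NN * xi r x)).
Proof. unfold RtoC, Copp, xi; simpl; f_equal; unfold Rdiv; ring. Qed.

Lemma RtoC_mult_theta_fourier (e : R) al NN J r t sg x :
  Cmult (RtoC e) (theta_fourier al NN J r t sg x) = theta_fourier (fun n => Cmult (RtoC e) (al n)) NN J r t sg x.
Proof. unfold theta_fourier, fourier; rewrite RtoC_mult_zsum; apply zsum_ext; intros n; ring. Qed.

Definition theta_of (s : sharp) : C -> C -> C := match s with SB => theta1 | _ => theta2 end.

Definition theta_coef (s : sharp) (n : Z) : C :=
  match s with SB => theta1_coef n | _ => RtoC 1 end.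

Definition mirror_sign (s : sharp) : R := match s with SD => 1 | _ => -1 end.

Definition mirror_coef (s : sharp) (n : Z) : C := Cmult (RtoC (mirror_sign s)) (theta_coef s n).

Lemma Cmod_theta_coef s n : Cmod (theta_coef s n) = 1.
Proof.
  destruct s; simpl; rewrite ?Cmod_1; auto.
  unfold theta1_coef; rewrite Cmod_mult, Cmod_R, pow_1_abs, Rmult_1_r.
  unfold Cmod, Ci; simpl; replace (0 * (0 * 1) + 1 * (1 * 1)) with 1 by ring; apply sqrt_1.
Qed.

Lemma Cmod_mirror_coef s n : Cmod (mirror_coef s n) = 1.
Proof.
  unfold mirror_coef; rewrite Cmod_mult, Cmod_theta_coef, Cmod_R.
  destruct s; simpl; rewrite ?Rabs_R1, ?Rabs_m1; ring.
Qed.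

Section ThetaFourier.
Variables (NN J r t : R).
Hypothesis HNN : 1 <= NN.
Hypothesis HJ : 0 <= J.
Hypothesis Hr : 0 < r.
Hypothesis Ht : 0 < t.

Let sig := J / NN.
Let tt := Cmult (RtoC (NN ^ 2)) (tau r t).
Let z (x : R) := RtoC (NN * xi r x).

Lemma zsummable_theta_term (sg : Z -> R) x : (forall n, Rabs (sg n) = 1) ->
  zsummable (fun n => Cmult (RtoC (sg n)) (theta_term n (Cplus (Cmult (RtoC sig) tt) (z x)) tt)).
Proof.
  intros Hsg; apply (zsummable_Cmod _ (fun n => RtoC (gauss NN J r t n))).
  - intros n; rewrite Cmod_mult, Cmod_R, Hsg, Cmod_R, Rabs_pos_eq by (left; apply exp_pos).
    unfold sig, tt, z; rewrite Cmod_theta_term by lra; ring.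
  - apply zsummable_gauss; auto.
Qed.

Lemma ephase_theta2 x :
  Cmult (ephase sig (z x)) (theta2 (Cplus (Cmult (RtoC sig) tt) (z x)) tt) =
  theta_fourier (fun _ => RtoC 1) NN J r t 1 x.
Proof.
  rewrite theta2_zsum, (zsum_ext _ (fun n => Cmult (RtoC 1) (theta_term n (Cplus (Cmult (RtoC sig) tt) (z x)) tt)))
    by (intros; ring).
  rewrite Cmult_zsum by (apply zsummable_theta_term; intros; apply Rabs_R1).
  unfold theta_fourier, fourier; apply zsum_ext; intros n; rewrite Rmult_1_l.
  transitivity (Cmult (ephase sig (z x)) (theta_term n (Cplus (Cmult (RtoC sig) tt) (z x)) tt)); [ring |].
  unfold sig, tt, z; rewrite ephase_theta_term by lra; ring.
Qed.

Lemma ephase_theta1 x :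
  Cmult (ephase sig (z x)) (theta1 (Cplus (Cmult (RtoC sig) tt) (z x)) tt) =
  theta_fourier theta1_coef NN J r t 1 x.
Proof.
  rewrite theta1_zsum, Cmult_assoc, Cmult_zsum
    by (apply zsummable_theta_term; intros; rewrite pow_1_abs; reflexivity).
  unfold theta_fourier, fourier; apply zsum_ext; intros n; rewrite Rmult_1_l.
  transitivity (Cmult (theta1_coef n) (Cmult (ephase sig (z x)) (theta_term n (Cplus (Cmult (RtoC sig) tt) (z x)) tt)));
    [unfold theta1_coef; ring |].
  unfold sig, tt, z; rewrite ephase_theta_term by lra; ring.
Qed.

Lemma ephase_theta_of s x :
  Cmult (ephase sig (z x)) (theta_of s (Cplus (Cmult (RtoC sig) tt) (z x)) tt) =
  theta_fourier (theta_coef s) NN J r t 1 x.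
Proof. destruct s; [apply ephase_theta2 | apply ephase_theta1 | apply ephase_theta2 ..]; auto. Qed.

Lemma ThetaA_fourier x : ThetaA sig (z x) tt = theta_fourier (theta_coef SA) NN J r t 1 x.
Proof. apply (ephase_theta_of SA). Qed.

Lemma Theta_fourier_pair s x : s <> SA ->
  Theta s sig (z x) tt = theta_fourier_pair (theta_coef s) (mirror_coef s) NN J r t x.
Proof.
  intros HsA.
  assert (Hshape : Theta s sig (z x) tt =
    Cplus (Cmult (ephase sig (z x)) (theta_of s (Cplus (Cmult (RtoC sig) tt) (z x)) tt))
          (Cmult (RtoC (mirror_sign s))
             (Cmult (ephase sig (z (- x))) (theta_of s (Cplus (Cmult (RtoC sig) tt) (z (- x))) tt)))).
  (* The second summand of [Theta s] is the first one at [-x]. *)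
  { unfold z; rewrite RtoC_xi_opp.
    destruct s; [contradiction | ..]; unfold Theta, ThetaB, ThetaC, ThetaD, theta_of, mirror_sign, Cminus;
      ring. }
  rewrite Hshape, !ephase_theta_of, theta_fourier_opp_x, RtoC_mult_theta_fourier; reflexivity.
Qed.

End ThetaFourier.

Lemma Theta_reflect s sigma z tau0 : s <> SA ->
  Theta s sigma (Copp z) tau0 = Cmult (RtoC (mirror_sign s)) (Theta s sigma z tau0).
Proof.
  intros HsA; destruct s; [contradiction | | |];
    unfold Theta, ThetaB, ThetaC, ThetaD, mirror_sign, Cminus;
    replace (Copp (Copp z)) with z by ring; ring.
Qed.

(** * Pairing Gaussian Fourier series *)

Definition theta_constant (NN J r ts : R) : C :=
  zsum (fun n => RtoC (2 * PI * r * gauss NN J r ts n)).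

Lemma theta2_gauss NN J r ts : 0 < r ->
  theta2 (Cmult (RtoC (NN * J)) (tau r ts)) (Cmult (RtoC (NN ^ 2)) (tau r ts)) =
  zsum (fun n => RtoC (gauss NN J r ts n)).
Proof.
  intros Hr; rewrite theta2_zsum; apply zsum_ext; intros n; unfold theta_term.
  assert (PI <> 0) by apply PI_neq0.
  rewrite (cexp_polar _ (- ts * (freq NN J n ^ 2 - J ^ 2) / (2 * r ^ 2)) 0).
  - unfold expi; rewrite Rmult_0_r, cos_0, sin_0; unfold gauss, Cmult, RtoC; simpl; f_equal; ring.
  - unfold Cmult, Cplus, RtoC, Ci, Cpi, tau, freq; simpl; field; lra.
  - unfold Cmult, Cplus, RtoC, Ci, Cpi, tau, freq; simpl; field; lra.
Qed.

Lemma theta_constant_theta2 K NN J r ts : 0 < r ->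
  Cmult (RtoC (K * PI * r)) (theta2 (Cmult (RtoC (NN * J)) (tau r ts)) (Cmult (RtoC (NN ^ 2)) (tau r ts))) =
  Cmult (RtoC (K / 2)) (theta_constant NN J r ts).
Proof.
  intros Hr; rewrite theta2_gauss, !RtoC_mult_zsum by auto; unfold theta_constant; rewrite RtoC_mult_zsum.
  apply zsum_ext; intros n; rewrite <- !RtoC_mult; f_equal; field.
Qed.

Lemma fourier_pairing_match r (a b : Z -> C) (w v : Z -> R) (mu : Z -> Z) :
  (forall n m, w n = v m <-> m = mu n) ->
  fourier_pairing r a w b v =
  zsum (fun n => Cmult (RtoC (2 * PI * r)) (Cmult (a n) (Cconj (b (mu n))))).
Proof.
  intros H; apply zsum_ext; intros n; rewrite (zsum_single _ (mu n)).
  - destruct (Req_EM_T (w n) (v (mu n))) as [E|E]; auto; exfalso; apply E, H; auto.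
  - intros m Hm; destruct (Req_EM_T (w n) (v m)) as [E|E]; auto; exfalso; apply Hm, H; auto.
Qed.

Lemma fourier_pairing_disjoint r (a b : Z -> C) (w v : Z -> R) :
  (forall n m, w n <> v m) -> fourier_pairing r a w b v = RtoC 0.
Proof.
  intros H; apply zsum_zero; intros n; apply zsum_zero; intros m.
  destruct (Req_EM_T (w n) (v m)) as [E|E]; auto; exfalso; eapply H; eauto.
Qed.

Lemma conj_product_unit K c1 c2 (g h : C) : Cmult g (Cconj h) = RtoC 1 ->
  Cmult (RtoC K) (Cmult (Cmult g (RtoC c1)) (Cconj (Cmult h (RtoC c2)))) = RtoC (K * (c1 * c2)).
Proof.
  intros H; rewrite Cmult_conj, Cconj_RtoC, (RtoC_mult K), (RtoC_mult c1).
  transitivity (Cmult (Cmult (RtoC K) (Cmult g (Cconj h))) (Cmult (RtoC c1) (RtoC c2))); [ring |].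
  rewrite H; ring.
Qed.

Lemma fourier_pairing_gauss NN J r ts t (g h : Z -> C) (w v : Z -> R) (mu : Z -> Z) : 0 < r ->
  (forall n m, w n = v m <-> m = mu n) ->
  (forall n, freq NN J (mu n) ^ 2 = freq NN J n ^ 2) ->
  (forall n, Cmult (g n) (Cconj (h (mu n))) = RtoC 1) ->
  fourier_pairing r (fun n => Cmult (g n) (RtoC (gauss NN J r t n))) w
    (fun n => Cmult (h n) (RtoC (gauss NN J r (ts - t) n))) v = theta_constant NN J r ts.
Proof.
  intros Hr Hwv Hsq Hgh; rewrite (fourier_pairing_match _ _ _ _ _ mu Hwv).
  apply zsum_ext; intros n.
  assert (Hg : gauss NN J r (ts - t) (mu n) = gauss NN J r (ts - t) n)
    by (unfold gauss; rewrite Hsq; reflexivity).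
  rewrite Hg, conj_product_unit, gauss_mul; auto.
Qed.

Lemma signed_div_eq (s1 s2 a b r : R) : r <> 0 -> s1 = 1 \/ s1 = -1 -> s2 = 1 \/ s2 = -1 ->
  s1 * a / r = s2 * b / r <-> a = s1 * s2 * b.
Proof.
  intros Hr Hs1 Hs2; unfold Rdiv; split; intros H.
  - apply Rmult_eq_reg_r in H; [destruct Hs1, Hs2; subst; lra | apply Rinv_neq_0_compat; auto].
  - rewrite H; destruct Hs1, Hs2; subst; ring.
Qed.

Lemma fourier_pairing_aligned NN Jj Jk r ts t (g : Z -> C) sg : 0 < r ->
  (forall n m, freq NN Jk n = freq NN Jj m -> Jj = Jk /\ m = n) ->
  (forall n, Cmod (g n) = 1) -> sg = 1 \/ sg = -1 ->
  fourier_pairing r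
    (fun n => Cmult (g n) (RtoC (gauss NN Jk r t n))) (fun n => sg * freq NN Jk n / r)
    (fun n => Cmult (g n) (RtoC (gauss NN Jj r (ts - t) n))) (fun n => sg * freq NN Jj n / r)
  = if Req_EM_T Jj Jk then theta_constant NN Jk r ts else RtoC 0.
Proof.
  intros Hr Hsame Hg Hsg.
  assert (Hw : forall n m, sg * freq NN Jk n / r = sg * freq NN Jj m / r <-> freq NN Jk n = freq NN Jj m)
    by (intros n m; rewrite signed_div_eq by (auto; lra); destruct Hsg; subst; split; intros; lra).
  destruct (Req_EM_T Jj Jk) as [<-|E].
  - apply (fourier_pairing_gauss _ _ _ _ _ _ _ _ _ (fun n => n)); auto.
    + intros n m; rewrite Hw; split; [intros H; apply (Hsame n m), H | intros ->; reflexivity].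
    + intros n; apply Cmult_conj_unit, Hg.
  - apply fourier_pairing_disjoint; intros n m H; apply E, (Hsame n m), Hw, H.
Qed.

Lemma fourier_pairing_mirrored NN Jj Jk r ts t (g h : Z -> C) sg1 sg2 (resonant : bool) (mu : Z -> Z) :
  0 < r -> (forall n m, freq NN Jk n = - freq NN Jj m <-> resonant = true /\ m = mu n) ->
  (resonant = true -> Jj = Jk) -> sg1 = 1 \/ sg1 = -1 -> sg2 = - sg1 ->
  (resonant = true -> forall n, Cmult (g n) (Cconj (h (mu n))) = RtoC 1) ->
  fourier_pairing r
    (fun n => Cmult (g n) (RtoC (gauss NN Jk r t n))) (fun n => sg1 * freq NN Jk n / r)
    (fun n => Cmult (h n) (RtoC (gauss NN Jj r (ts - t) n))) (fun n => sg2 * freq NN Jj n / r)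
  = if resonant then theta_constant NN Jk r ts else RtoC 0.
Proof.
  intros Hr Hmirror HJ Hs1 Hs2 Hgh.
  assert (Hw : forall n m, sg1 * freq NN Jk n / r = sg2 * freq NN Jj m / r <-> freq NN Jk n = - freq NN Jj m)
    by (intros n m; subst sg2; rewrite signed_div_eq by (lra || (destruct Hs1; subst; lra));
        destruct Hs1; subst; split; intros; lra).
  destruct resonant.
  - destruct (HJ eq_refl).
    apply (fourier_pairing_gauss _ _ _ _ _ _ _ _ _ mu); auto.
    + intros n m; rewrite Hw, Hmirror; intuition.
    + intros n; rewrite (proj2 (Hmirror n (mu n)) (conj eq_refl eq_refl)); ring.
  - apply fourier_pairing_disjoint; intros n m H; apply Hw, Hmirror in H; destruct H; discriminate.
Qed.

Section HalfRange.
Variables (NN Jj Jk r ts t : R) (al be : Z -> C) (resonant : bool) (mu : Z -> Z).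
Hypothesis Hr : 0 < r.
Hypothesis Ht : 0 < t.
Hypothesis Hts : t < ts.
Hypothesis HNN : 1 <= NN.
Hypothesis HJj : 0 <= Jj.
Hypothesis HJk : 0 <= Jk.
Hypothesis Hal : forall n, Cmod (al n) = 1.
Hypothesis Hbe : forall n, Cmod (be n) = 1.
Hypothesis Hdiff : forall n m, exists z, freq NN Jk n - freq NN Jj m = IZR z.
Hypothesis Hsum : forall n m, exists z, freq NN Jk n + freq NN Jj m = IZR z.
Hypothesis Hsame : forall n m, freq NN Jk n = freq NN Jj m -> Jj = Jk /\ m = n.
Hypothesis Hmirror : forall n m, freq NN Jk n = - freq NN Jj m <-> resonant = true /\ m = mu n.
Hypothesis Hresonant : resonant = true -> Jj = Jk /\
  forall n, Cmult (al n) (Cconj (be (mu n))) = RtoC 1 /\ Cmult (be n) (Cconj (al (mu n))) = RtoC 1.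

Lemma signed_freq_diff_integer sg1 sg2 n m : sg1 = 1 \/ sg1 = -1 -> sg2 = 1 \/ sg2 = -1 ->
  exists z, (sg1 * freq NN Jk n / r - sg2 * freq NN Jj m / r) * r = IZR z.
Proof.
  intros Hs1 Hs2; destruct (Hdiff n m) as [z1 Hz1], (Hsum n m) as [z2 Hz2].
  destruct Hs1 as [-> | ->], Hs2 as [-> | ->];
    [exists z1 | exists z2 | exists (- z2)%Z | exists (- z1)%Z];
    rewrite ?opp_IZR, <- ?Hz1, <- ?Hz2; field; lra.
Qed.

Lemma is_RInt_theta_fourier_product (g h : Z -> C) sg1 sg2 :
  (forall n, Cmod (g n) = 1) -> (forall n, Cmod (h n) = 1) -> sg1 = 1 \/ sg1 = -1 -> sg2 = 1 \/ sg2 = -1 ->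
  is_RInt (fun x => Cmult (Cconj (theta_fourier h NN Jj r (ts - t) sg2 x)) (theta_fourier g NN Jk r t sg1 x))
    (- (PI * r)) (PI * r)
    (fourier_pairing r (fun n => Cmult (g n) (RtoC (gauss NN Jk r t n))) (fun n => sg1 * freq NN Jk n / r)
      (fun n => Cmult (h n) (RtoC (gauss NN Jj r (ts - t) n))) (fun n => sg2 * freq NN Jj n / r)).
Proof.
  intros Hg Hh Hs1 Hs2; replace (PI * r) with (- (PI * r) + 2 * PI * r) at 2 by ring.
  apply is_RInt_fourier_orthogonal;
    [auto | apply zsummable_unit_gauss; auto | apply zsummable_unit_gauss; auto; lra
    | intros; apply signed_freq_diff_integer; auto].
Qed.

Lemma is_RInt_theta_fourier_pair_period :
  is_RInt (fun x => Cmult (Cconj (theta_fourier_pair al be NN Jj r (ts - t) x))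
                          (theta_fourier_pair al be NN Jk r t x)) (- (PI * r)) (PI * r)
    (Cplus (Cplus (if Req_EM_T Jj Jk then theta_constant NN Jk r ts else RtoC 0)
                  (if Req_EM_T Jj Jk then theta_constant NN Jk r ts else RtoC 0))
           (Cplus (if resonant then theta_constant NN Jk r ts else RtoC 0)
                  (if resonant then theta_constant NN Jk r ts else RtoC 0))).
Proof.
  apply (is_RInt_ext (fun x => @plus CR
    (@plus CR (Cmult (Cconj (theta_fourier al NN Jj r (ts - t) 1 x)) (theta_fourier al NN Jk r t 1 x))
              (Cmult (Cconj (theta_fourier be NN Jj r (ts - t) (-1) x)) (theta_fourier be NN Jk r t (-1) x)))
    (@plus CR (Cmult (Cconj (theta_fourier be NN Jj r (ts - t) (-1) x)) (theta_fourier al NN Jk r t 1 x))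
              (Cmult (Cconj (theta_fourier al NN Jj r (ts - t) 1 x)) (theta_fourier be NN Jk r t (-1) x))))).
  { intros x _; unfold theta_fourier_pair; rewrite Cplus_conj.
    repeat change (@plus _ ?a ?b) with (Cplus a b); Cring. }
  eapply is_RInt_value;
    [apply is_RInt_plus; apply is_RInt_plus; apply is_RInt_theta_fourier_product; auto; lra |].
  rewrite (fourier_pairing_aligned _ _ _ _ _ _ al 1), (fourier_pairing_aligned _ _ _ _ _ _ be (-1)),
    (fourier_pairing_mirrored _ _ _ _ _ _ al be 1 (-1) resonant mu),
    (fourier_pairing_mirrored _ _ _ _ _ _ be al (-1) 1 resonant mu); auto; try lra;
    intros Hres; try apply (Hresonant Hres); intros n; apply (Hresonant Hres).
Qed.

Lemma is_RInt_theta_fourier_pair_half (f : R -> C) :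
  (forall x, f x = Cmult (Cconj (theta_fourier_pair al be NN Jj r (ts - t) x))
                         (theta_fourier_pair al be NN Jk r t x)) ->
  (forall x, f (- x) = f x) ->
  is_RInt f 0 (PI * r) (Cplus (if Req_EM_T Jj Jk then theta_constant NN Jk r ts else RtoC 0)
                              (if resonant then theta_constant NN Jk r ts else RtoC 0)).
Proof.
  intros Hf Heven.
  replace (Cplus _ _) with (Cmult (RtoC (/ 2)) (Cplus
    (Cplus (if Req_EM_T Jj Jk then theta_constant NN Jk r ts else RtoC 0)
           (if Req_EM_T Jj Jk then theta_constant NN Jk r ts else RtoC 0))
    (Cplus (if resonant then theta_constant NN Jk r ts else RtoC 0)
           (if resonant then theta_constant NN Jk r ts else RtoC 0)))).
  - apply is_RInt_even_half; auto.
    + assert (0 < PI) by apply PI_RGT_0; nra.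
    + apply (is_RInt_ext _ _ _ _ _ (fun x _ => eq_sym (Hf x))), is_RInt_theta_fourier_pair_period.
  - apply injective_projections; simpl; field.
Qed.
End HalfRange.

(** * Half-integer frequencies *)

Lemma freq_IZR nn q n : freq (IZR nn) (IZR q / 2) n = IZR (nn * (2 * n - 1) + q) / 2.
Proof. unfold freq; rewrite plus_IZR, mult_IZR, minus_IZR, mult_IZR; simpl; field. Qed.

Lemma IZR_half_diff A B z : (A - B = 2 * z)%Z -> IZR A / 2 - IZR B / 2 = IZR z.
Proof. intros H; apply (f_equal IZR) in H; rewrite minus_IZR, mult_IZR in H; simpl in H; lra. Qed.

Lemma IZR_half_sum A B z : (A + B = 2 * z)%Z -> IZR A / 2 + IZR B / 2 = IZR z.
Proof. intros H; apply (f_equal IZR) in H; rewrite plus_IZR, mult_IZR in H; simpl in H; lra. Qed.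

Lemma IZR_half_inj A B : IZR A / 2 = IZR B / 2 -> A = B.
Proof. intros H; apply eq_IZR; lra. Qed.

Section HalfIntegerFreq.
Variables (nn c N j k : Z).
Hypothesis Hj : (1 <= j <= N)%Z.
Hypothesis Hk : (1 <= k <= N)%Z.

Let Jj := IZR (2 * j + c) / 2.
Let Jk := IZR (2 * k + c) / 2.

Lemma freq_diff_integer n m : exists z, freq (IZR nn) Jk n - freq (IZR nn) Jj m = IZR z.
Proof. exists (nn * (n - m) + k - j)%Z; unfold Jj, Jk; rewrite !freq_IZR; apply IZR_half_diff; ring. Qed.

Lemma freq_sum_integer n m : exists z, freq (IZR nn) Jk n + freq (IZR nn) Jj m = IZR z.
Proof. exists (nn * (n + m - 1) + k + j + c)%Z; unfold Jj, Jk; rewrite !freq_IZR; apply IZR_half_sum; ring. Qed.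

Lemma freq_eq_same (HN : (N <= nn)%Z) n m :
  freq (IZR nn) Jk n = freq (IZR nn) Jj m -> Jj = Jk /\ m = n.
Proof.
  unfold Jj, Jk; rewrite !freq_IZR; intros H.
  assert (E : (nn * (n - m) = j - k)%Z) by (apply IZR_half_inj in H; lia).
  assert (n = m) by (destruct (Z.lt_trichotomy (n - m) 0) as [|[|]]; nia).
  subst m; replace k with j by lia; auto.
Qed.

(* The equation reads [nn (n + m - 1) = - (j + k + c)] with right side in [[-nn, 0]],
   so [n + m - 1] is [0] or [-1]. *)
Lemma freq_eq_mirror (Hc : (-2 <= c)%Z) (HN : (2 * N + c <= nn)%Z) (Hnn : (0 < nn)%Z) n m :
  freq (IZR nn) Jk n = - freq (IZR nn) Jj m <->
  (c = -2 /\ j = 1 /\ k = 1 /\ m = 1 - n)%Z \/ (nn = 2 * N + c /\ j = N /\ k = N /\ m = - n)%Z.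
Proof.
  unfold Jj, Jk; rewrite !freq_IZR, <- Rdiv_opp_l, <- opp_IZR; split.
  - intros H; apply IZR_half_inj in H.
    assert (E : (nn * (n + m - 1) = - (j + k + c))%Z) by lia.
    destruct (Z.lt_trichotomy (n + m - 1) 0) as [Hlt|[Heq|Hgt]].
    + assert (n + m - 1 = -1)%Z by nia; right; nia.
    + left; rewrite Heq in E; lia.
    + nia.
  - intros [(-> & -> & -> & ->)|(-> & -> & -> & ->)]; do 2 f_equal; ring.
Qed.
End HalfIntegerFreq.

(** * The seven root systems *)

Definition calN_Z (R0 : rtype) (N : nat) : Z :=
  let n := Z.of_nat N in
  match R0 with
  | TA => n | TB => 2 * n - 1 | TBv | TCv => 2 * n
  | TC => 2 * n + 2 | TBC => 2 * n + 1 | TD => 2 * n - 2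
  end.

Definition J_offset (R0 : rtype) : Z :=
  match R0 with TA | TCv => -1 | TB | TBv | TD => -2 | TC | TBC => 0 end.

Lemma calN_IZR R0 N : calN R0 N = IZR (calN_Z R0 N).
Proof.
  destruct R0; unfold calN, calN_Z; rewrite ?plus_IZR, ?minus_IZR, ?mult_IZR, <- ?INR_IZR_INZ;
    try reflexivity; ring.
Qed.

Lemma Jfun_IZR R0 j : Jfun R0 j = IZR (2 * Z.of_nat j + J_offset R0) / 2.
Proof.
  destruct R0; unfold Jfun, J_offset; rewrite ?plus_IZR, ?minus_IZR, ?mult_IZR, <- ?INR_IZR_INZ;
    simpl; field.
Qed.

Lemma calN_ge_1 R0 N : (1 <= N)%nat -> (R0 = TD -> (2 <= N)%nat) -> 1 <= calN R0 N.
Proof.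
  intros HN HD; rewrite calN_IZR; apply IZR_le.
  destruct R0; try specialize (HD eq_refl); unfold calN_Z; lia.
Qed.

Lemma Jfun_nonneg R0 j : (1 <= j)%nat -> 0 <= Jfun R0 j.
Proof.
  intros Hj; rewrite Jfun_IZR; unfold Rdiv; apply Rmult_le_pos; [| lra].
  apply IZR_le; destruct R0; unfold J_offset; lia.
Qed.

Lemma Jfun_inj R0 j k : Jfun R0 j = Jfun R0 k -> j = k.
Proof. rewrite !Jfun_IZR; intros H; apply IZR_half_inj in H; lia. Qed.

Lemma freq_labels_diff R0 N j k n m :
  exists z, freq (calN R0 N) (Jfun R0 k) n - freq (calN R0 N) (Jfun R0 j) m = IZR z.
Proof. rewrite calN_IZR, !Jfun_IZR; apply freq_diff_integer. Qed.

Lemma freq_labels_sum R0 N j k n m :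
  exists z, freq (calN R0 N) (Jfun R0 k) n + freq (calN R0 N) (Jfun R0 j) m = IZR z.
Proof. rewrite calN_IZR, !Jfun_IZR; apply freq_sum_integer. Qed.

Lemma freq_labels_eq R0 N j k n m : (R0 = TD -> (2 <= N)%nat) ->
  (1 <= j <= N)%nat -> (1 <= k <= N)%nat ->
  freq (calN R0 N) (Jfun R0 k) n = freq (calN R0 N) (Jfun R0 j) m -> Jfun R0 j = Jfun R0 k /\ m = n.
Proof.
  intros HD Hj Hk; rewrite calN_IZR, !Jfun_IZR; apply (freq_eq_same _ _ (Z.of_nat N)); try lia.
  destruct R0; try specialize (HD eq_refl); unfold calN_Z; lia.
Qed.

Definition resonant (R0 : rtype) (N j k : nat) : bool :=
  match R0 with
  | TB | TBv => (j =? 1) && (k =? 1)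
  | TD => (j =? 1) && (k =? 1) || (j =? N) && (k =? N)
  | _ => false
  end.

Definition reflection (j : nat) (n : Z) : Z := if j =? 1 then (1 - n)%Z else (- n)%Z.

Lemma resonant_diag R0 N j k : resonant R0 N j k = true -> j = k.
Proof.
  destruct R0; simpl; try discriminate; rewrite ?Bool.orb_true_iff, ?Bool.andb_true_iff, ?Nat.eqb_eq; lia.
Qed.

Lemma resonant_spec R0 N j k n m : R0 <> TA -> (R0 = TD -> (2 <= N)%nat) ->
  (1 <= j <= N)%nat -> (1 <= k <= N)%nat ->
  freq (calN R0 N) (Jfun R0 k) n = - freq (calN R0 N) (Jfun R0 j) m <->
  resonant R0 N j k = true /\ m = reflection j n.
Proof.
  intros HA HD Hj Hk; destruct R0; try (exfalso; apply HA; reflexivity); try specialize (HD eq_refl);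
    rewrite calN_IZR, !Jfun_IZR, (freq_eq_mirror _ _ (Z.of_nat N))
      by (cbv beta iota zeta delta [calN_Z J_offset]; lia);
    cbv beta iota zeta delta [calN_Z J_offset resonant reflection];
    destruct (Nat.eqb_spec j 1); rewrite ?Bool.orb_true_iff, ?Bool.andb_true_iff, ?Nat.eqb_eq;
    (lia || (split; [lia | intros [[=] _]])).
Qed.

Lemma mconst_theta_constant R0 N r j ts : (1 <= j <= N)%nat -> 0 < r ->
  mconst R0 N r j ts =
  Cmult (RtoC (if resonant R0 N j j then 2 else 1)) (theta_constant (calN R0 N) (Jfun R0 j) r ts).
Proof.
  intros Hj Hr.
  assert (Hval : forall K J e, J = Jfun R0 j -> e = K / 2 ->
    Cmult (RtoC (K * PI * r)) (theta2 (Cmult (RtoC (calN R0 N * J)) (tau r ts))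
                                      (Cmult (RtoC (calN R0 N ^ 2)) (tau r ts))) =
    Cmult (RtoC e) (theta_constant (calN R0 N) (Jfun R0 j) r ts))
    by (intros K J e -> ->; apply theta_constant_theta2, Hr).
  assert (Hzero : RtoC 0 = Cmult (RtoC (calN R0 N * 0)) (tau r ts))
    by (unfold tau, Cmult, RtoC; simpl; f_equal; ring).
  destruct R0; unfold mconst, resonant; cbv zeta;
    try (apply Hval; [reflexivity | field]);
    destruct (Nat.eqb_spec j 1) as [->|Hj1]; cbn [andb orb Nat.eqb]; rewrite ?Hzero;
    try (apply Hval; [simpl; ring | field]).
  destruct (Nat.eqb_spec j N) as [->|HjN]; cbn [andb orb]; apply Hval; reflexivity || field.
Qed.

Lemma sign_reflection n : (-1) ^ Z.abs_nat n * (-1) ^ Z.abs_nat (1 - n) = -1.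
Proof.
  rewrite <- pow_add.
  assert (Hodd : exists q, (Z.abs_nat n + Z.abs_nat (1 - n) = S (2 * q))%nat)
    by (destruct (Z_le_gt_dec 1 n); [exists (Z.to_nat (n - 1)) | exists (Z.to_nat (- n))]; lia).
  destruct Hodd as [q ->]; apply pow_1_odd.
Qed.

Lemma coef_reflection R0 N j k n : resonant R0 N j k = true ->
  Cmult (theta_coef (sharp_of R0) n) (Cconj (mirror_coef (sharp_of R0) (reflection j n))) = RtoC 1 /\
  Cmult (mirror_coef (sharp_of R0) n) (Cconj (theta_coef (sharp_of R0) (reflection j n))) = RtoC 1.
Proof.
  assert (HB : forall n, Cmult (theta1_coef n) (Cconj (Cmult (RtoC (-1)) (theta1_coef (1 - n)))) = RtoC 1 /\
                         Cmult (Cmult (RtoC (-1)) (theta1_coef n)) (Cconj (theta1_coef (1 - n))) = RtoC 1).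
  { intros m; assert (Hs := sign_reflection m); unfold theta1_coef.
    generalize dependent ((-1) ^ Z.abs_nat (1 - m)); generalize ((-1) ^ Z.abs_nat m); intros s1 s2 Hs.
    unfold Cconj, Cmult, Ci, RtoC; simpl; split; f_equal; nra. }
  destruct R0; intros Hres; try discriminate; unfold mirror_coef; cbn [sharp_of theta_coef mirror_sign].
  - apply andb_prop in Hres as [Hj _]; apply Nat.eqb_eq in Hj; subst j; apply HB.
  - apply andb_prop in Hres as [Hj _]; apply Nat.eqb_eq in Hj; subst j; apply HB.
  - rewrite !Cmult_conj, !Cconj_RtoC; split; ring.
Qed.

Lemma M_TA_fourier N r j x s : (1 <= j <= N)%nat -> 0 < r -> 0 < s ->
  M TA N r j x s = theta_fourier (theta_coef SA) (calN TA N) (Jfun TA j) r s 1 x.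
Proof.
  intros Hj Hr Hs; apply ThetaA_fourier; auto; [apply calN_ge_1 | apply Jfun_nonneg]; lia || discriminate.
Qed.

Lemma M_fourier_pair R0 N r j x s : R0 <> TA -> (R0 = TD -> (2 <= N)%nat) ->
  (1 <= j <= N)%nat -> 0 < r -> 0 < s ->
  M R0 N r j x s = theta_fourier_pair (theta_coef (sharp_of R0)) (mirror_coef (sharp_of R0))
                     (calN R0 N) (Jfun R0 j) r s x.
Proof.
  intros HA HD Hj Hr Hs; apply Theta_fourier_pair; auto.
  - apply calN_ge_1; auto; lia.
  - apply Jfun_nonneg; lia.
  - destruct R0; discriminate || (exfalso; auto).
Qed.

Lemma M_product_even R0 N r j k s1 s2 x : R0 <> TA ->
  Cmult (Cconj (M R0 N r j (- x) s1)) (M R0 N r k (- x) s2) =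
  Cmult (Cconj (M R0 N r j x s1)) (M R0 N r k x s2).
Proof.
  intros HA; unfold M; rewrite !RtoC_xi_opp, !Theta_reflect by (destruct R0; discriminate || (exfalso; auto)).
  apply Cconj_sign_product; destruct R0; simpl; ring.
Qed.

Lemma is_RInt_M_TA N r ts t j k : (1 <= j <= N)%nat -> (1 <= k <= N)%nat -> 0 < r -> 0 < t -> t < ts ->
  is_RInt (fun x => Cmult (Cconj (M TA N r j x (ts - t))) (M TA N r k x t)) 0 (2 * PI * r)
    (if Nat.eqb j k then mconst TA N r j ts else RtoC 0).
Proof.
  intros Hj Hk Hr Ht Hts.
  assert (HNN : 1 <= calN TA N) by (apply calN_ge_1; lia || discriminate).
  assert (HJ : forall i, (1 <= i)%nat -> 0 <= Jfun TA i) by (intros; apply Jfun_nonneg; lia).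
  apply (is_RInt_ext (fun x => Cmult (Cconj (theta_fourier (theta_coef SA) (calN TA N) (Jfun TA j) r (ts - t) 1 x))
                                     (theta_fourier (theta_coef SA) (calN TA N) (Jfun TA k) r t 1 x))).
  { intros x _; rewrite !M_TA_fourier; auto; lra. }
  eapply is_RInt_value.
  { replace (2 * PI * r) with (0 + 2 * PI * r) by ring.
    apply is_RInt_fourier_orthogonal; auto.
    - apply zsummable_unit_gauss; [apply Cmod_theta_coef | auto | apply HJ; lia | auto | auto].
    - apply zsummable_unit_gauss; [apply Cmod_theta_coef | auto | apply HJ; lia | auto | lra].
    - intros n m; destruct (freq_labels_diff TA N j k n m) as [z Hz].
      exists z; rewrite <- Hz; field; lra. }
  rewrite fourier_pairing_aligned; auto.
  - rewrite mconst_theta_constant by auto; simpl resonant.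
    destruct (Nat.eqb_spec j k) as [<-|Hjk].
    + destruct (Req_EM_T (Jfun TA j) (Jfun TA j)) as [_|E]; [Cring | contradiction].
    + destruct (Req_EM_T (Jfun TA j) (Jfun TA k)) as [E|_]; [exfalso; apply Hjk, (Jfun_inj TA), E | reflexivity].
  - intros n m; apply freq_labels_eq; auto; discriminate.
  - apply Cmod_theta_coef.
Qed.

Lemma is_RInt_M_half_range R0 N r ts t j k : R0 <> TA -> (R0 = TD -> (2 <= N)%nat) ->
  (1 <= j <= N)%nat -> (1 <= k <= N)%nat -> 0 < r -> 0 < t -> t < ts ->
  is_RInt (fun x => Cmult (Cconj (M R0 N r j x (ts - t))) (M R0 N r k x t)) 0 (PI * r)
    (if Nat.eqb j k then mconst R0 N r j ts else RtoC 0).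
Proof.
  intros HA HD Hj Hk Hr Ht Hts.
  eapply is_RInt_value.
  - apply (is_RInt_theta_fourier_pair_half (calN R0 N) (Jfun R0 j) (Jfun R0 k) r ts t
      (theta_coef (sharp_of R0)) (mirror_coef (sharp_of R0)) (resonant R0 N j k) (reflection j));
      auto using Cmod_theta_coef, Cmod_mirror_coef, freq_labels_diff, freq_labels_sum.
    + apply calN_ge_1; auto; lia.
    + apply Jfun_nonneg; lia.
    + apply Jfun_nonneg; lia.
    + intros n m; apply freq_labels_eq; auto.
    + intros n m; apply resonant_spec; auto.
    + intros Hres; split; [f_equal; apply (resonant_diag _ _ _ _ Hres) |].
      intros n; apply (coef_reflection _ N j k), Hres.
    + intros x; rewrite !M_fourier_pair; auto; lra.
    + intros x; apply M_product_even; auto.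
  - rewrite mconst_theta_constant by auto.
    destruct (Nat.eqb_spec j k) as [<-|Hjk].
    + destruct (Req_EM_T (Jfun R0 j) (Jfun R0 j)) as [_|E]; [| contradiction].
      destruct (resonant R0 N j j); Cring.
    + destruct (Req_EM_T (Jfun R0 j) (Jfun R0 k)) as [E|_]; [exfalso; apply Hjk, (Jfun_inj R0), E |].
      destruct (resonant R0 N j k) eqn:Hres; [exfalso; apply Hjk, (resonant_diag _ _ _ _ Hres) | Cring].
Qed.

Theorem lemma2p1 (R0 : rtype) (N : nat) (r ts t : R) (j k : nat) :
  (R0 = TD -> (2 <= N)%nat) ->
  0 < r -> 0 < ts -> 0 < t -> t < ts ->
  (1 <= j <= N)%nat -> (1 <= k <= N)%nat ->
  is_RInt (fun x => Cmult (Cconj (M R0 N r j x (ts - t))) (M R0 N r k x t))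
    0 (upper R0 r)
    (if Nat.eqb j k then mconst R0 N r j ts else RtoC 0).
Proof.
  intros HD Hr _ Ht Hts Hj Hk.
  destruct R0; [apply is_RInt_M_TA | apply is_RInt_M_half_range ..]; auto; discriminate.
Qed.
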